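(* Let $n=16$. The only effective divisor classes $D$ on $X$ with $\chi(D)\ge1$ and $2B\cdot D<B\cdot K$ are $0$ (i.e. $\mathcal{O}_X$) and the exceptional classes $E_i$, $1\le i\le 16$.
   Context: Let $X$ be the blowup of $\mathbb{P}^2_{\mathbb{C}}$ at $n$ very general points, with $H$ the pullback of a line class, $E_i$ the exceptional divisors, $E=\sum_iE_i$, and $K=K_X=-3H+E$; $B=\sqrt nH-E$ (so $B=4H-E$ for $n=16$). Write $\chi(D)=\chi(\mathcal{O}_X(D))$; effective means the class of an effective divisor (zero allowed). *)

From mathcomp Require Import all_boot all_algebra.
From mathcomp Require Import reals complex mpoly.
Set Implicit Arguments. Unset Strict Implicit. Unset Printing Implicit Defensive.
Import GRing.Theory.
Local Open Scope ring_scope.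

(* A divisor class on X = Bl_{p_1..p_n} P^2 : D = d H + sum_j e_j E_j,
   stored as the pair (d, e).  Pic X = Z H (+) (+)_j Z E_j. *)
Definition cls (n : nat) := (int * {ffun 'I_n -> int})%type.

Definition Hcls (n : nat) : cls n := (1, [ffun=> 0]).
Definition zerocls (n : nat) : cls n := (0, [ffun=> 0]).
Definition Ecls (n : nat) (i : 'I_n) : cls n := (0, [ffun j => if j == i then 1 else 0]).
Definition Esum (n : nat) : cls n := (0, [ffun=> 1]).
Definition Kcls (n : nat) : cls n := (-3, [ffun=> 1]).
(* B = 4H - E  (this is sqrt(n) H - E for n = 16) *)
Definition B16 : cls 16 := (4, [ffun=> -1]).

(* intersection form: H^2 = 1, E_i^2 = -1, H.E_i = 0, E_i.E_j = 0 (i<>j) *)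
Definition dot (n : nat) (D D' : cls n) : int :=
  D.1 * D'.1 - \sum_(j < n) D.2 j * D'.2 j.

(* chi(O_X(D)) = 1 + (D.D - K.D)/2  (Riemann-Roch on a rational surface) *)
Definition chi (n : nat) (D : cls n) : rat :=
  1 + (dot D D - dot (Kcls n) D)%:~R / 2.

Section Geometry.
Variable R : realType.
Local Notation C := (R[i]).

(* For a homogeneous F in C[x,y,z] and an affine point p = (a,b), i.e. the
   projective point (a:b:1), the multiplicity of the curve F = 0 at p is at
   least m : int, i.e. every monomial of degree < m of F(x+a, y+b, 1) has
   coefficient zero (vacuous when m <= 0). *)
Definition mult_ge (F : {mpoly C[3]}) (p : C * C) (m : int) : Prop :=
  let G : {mpoly C[2]} :=
    comp_mpoly [tuple 'X_(inord 0) + (p.1)%:MP; 'X_(inord 1) + (p.2)%:MP; 1] F in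
  forall mon : 'X_{1.. 2}, ((mdeg mon)%:Z < m)%R -> G@_mon = 0.

(* D = d H + sum e_j E_j is the class of an effective divisor on the blowup of
   P^2 at the points (pts j : 1) iff there is a nonzero form F of degree d
   whose curve has multiplicity >= -e_j at each p_j  (an effective divisor is
   the total transform of {F = 0} minus sum mult_j E_j, plus nonnegative
   combinations of the E_j; F constant allowed, giving d = 0). *)
Definition effective (n : nat) (pts : 'I_n -> C * C) (D : cls n) : Prop :=
  (0 <= D.1)%R /\
  exists F : {mpoly C[3]}, F != 0 /\ F \is (absz D.1).-homog /\
    forall j : 'I_n, mult_ge F (pts j) (- D.2 j).

Definition coords (n : nat) (pts : 'I_n -> C * C) : 'I_(n + n) -> C :=
  fun k => match split k with inl j => (pts j).1 | inr j => (pts j).2 end.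

End Geometry.

From mathcomp Require Import all_boot all_algebra.
From mathcomp Require Import reals complex mpoly.
From mathcomp Require Import zify ring lra.

Set Implicit Arguments.
Unset Strict Implicit.
Unset Printing Implicit Defensive.
Import order.Order.TTheory GRing.Theory Num.Theory.
Local Open Scope ring_scope.

(* Write D = d H + sum_j e_j E_j, S = sum_j e_j and Q = sum_j e_j^2.  Then
   chi(D) >= 1 reads d^2 + 3d - Q + S >= 0 and 2 B.D < B.K = 4 reads
   4d + S <= 1.  Cauchy-Schwarz in the form sum_j (4 e_j + d)^2 >= 0, together
   with e^2 + e >= 0 on the integers, leaves only d = 0; then Q <= S <= 1 and
   e^2 >= e force every e_j in {0, 1} with at most one e_j = 1. *)

Lemma int_sqr_subr_ge0 (x : int) : 0 <= x * x - x.
Proof. nia. Qed.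

Lemma int_sqr_addr_ge0 (x : int) : 0 <= x * x + x.
Proof. nia. Qed.

Lemma sum_sqr_affine_ge0 (I : finType) (e : I -> int) (a b : int) :
  0 <= a * a * \sum_i e i * e i + 2 * a * b * \sum_i e i + #|I|%:R * (b * b).
Proof.
have -> : a * a * \sum_i e i * e i + 2 * a * b * \sum_i e i + #|I|%:R * (b * b)
          = \sum_i (a * e i + b) ^+ 2.
  have sqrE i : (a * e i + b) ^+ 2 = a * a * (e i * e i) + 2 * a * b * e i + b * b.
    by ring.
  rewrite (eq_bigr _ (fun i _ => sqrE i)).
  by rewrite !big_split /= sumr_const -(mulr_natl (b * b)) -!mulr_sumr.
by apply: sumr_ge0 => i _; exact: sqr_ge0.
Qed.

Lemma sum_sqr_le_sum_zero_one (I : finType) (e : I -> int) :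
  \sum_i e i * e i <= \sum_i e i -> forall i, e i = 0 \/ e i = 1.
Proof.
move=> hQS i.
have hsum : \sum_(j | true) (e j * e j - e j) = 0.
  apply/le_anti; rewrite sumr_ge0 ?andbT => [|j _]; last exact: int_sqr_subr_ge0.
  by rewrite sumrB subr_le0.
have /(_ i isT) := psumr_eq0P (fun j _ => int_sqr_subr_ge0 (e j)) hsum; nia.
Qed.

Lemma zero_one_sum_le1 (I : finType) (e : {ffun I -> int}) :
  (forall i, e i = 0 \/ e i = 1) -> \sum_i e i <= 1 ->
  e = [ffun=> 0] \/ exists j, e = [ffun i => if i == j then 1 else 0].
Proof.
move=> e01 hS.
have e_ge0 i : 0 <= e i by case: (e01 i) => ->.
case: (boolP [exists j, e j == 1]) => [/existsP [j /eqP ej1] | /existsPn e_ne1].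
  right; exists j; apply/ffunP => i; rewrite ffunE.
  case: eqP => [-> // | /eqP nij].
  have hrest : \sum_(k | k != j) e k = 0.
    apply/le_anti; rewrite sumr_ge0 // andbT.
    by move: hS; rewrite (bigD1 j) //= ej1 -lerBrDl subrr.
  exact: (psumr_eq0P (fun k _ => e_ge0 k) hrest).
left; apply/ffunP => i; rewrite ffunE.
by case: (e01 i) => // ei1; move: (e_ne1 i); rewrite ei1 eqxx.
Qed.

Lemma dot_Kcls (n : nat) (D : cls n) : dot (Kcls n) D = -3 * D.1 - \sum_j D.2 j.
Proof. by rewrite /dot; under eq_bigr => j _ do rewrite ffunE mul1r. Qed.

Lemma dot_B16 (D : cls 16) : dot B16 D = 4 * D.1 + \sum_j D.2 j.
Proof.
rewrite /dot; under eq_bigr => j _ do rewrite ffunE mulN1r.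
by rewrite sumrN opprK.
Qed.

Lemma dot_B16_Kcls : dot B16 (Kcls 16) = 4.
Proof.
rewrite dot_B16; under eq_bigr => j _ do rewrite ffunE.
by rewrite sumr_const card_ord.
Qed.

Lemma chi_ge1E (n : nat) (D : cls n) :
  (1 <= chi D) = (0 <= dot D D - dot (Kcls n) D).
Proof. by rewrite /chi lerDl pmulr_lge0 ?invr_gt0 // ler0z. Qed.

Lemma chi_eq1 (n : nat) (D : cls n) : dot D D = dot (Kcls n) D -> chi D = 1.
Proof. by move=> DK; rewrite /chi DK subrr mul0r addr0. Qed.

Lemma dot_Ecls_Ecls (n : nat) (i : 'I_n) : dot (Ecls i) (Ecls i) = -1.
Proof.
rewrite /dot (bigD1 i) //= big1 => [|j /negbTE ji]; last by rewrite ffunE ji mul0r.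
by rewrite !ffunE eqxx.
Qed.

Lemma sum_Ecls (n : nat) (i : 'I_n) : \sum_j (Ecls i).2 j = 1.
Proof.
rewrite (bigD1 i) //= big1 => [|j /negbTE ji]; last by rewrite ffunE ji.
by rewrite ffunE eqxx addr0.
Qed.

Lemma dot_Kcls_Ecls (n : nat) (i : 'I_n) : dot (Kcls n) (Ecls i) = -1.
Proof. by rewrite dot_Kcls sum_Ecls mulr0 sub0r. Qed.

Lemma dot_B16_Ecls (i : 'I_16) : dot B16 (Ecls i) = 1.
Proof. by rewrite dot_B16 sum_Ecls mulr0 add0r. Qed.

Lemma dot_zerocls (n : nat) (D : cls n) : dot D (zerocls n) = 0.
Proof. by rewrite /dot big1 ?mulr0 ?subr0 // => j _; rewrite ffunE mulr0. Qed.

Lemma effective_nonneg_exceptional (R : realType) (n : nat) (pts : 'I_n -> R[i] * R[i])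
    (D : cls n) :
  D.1 = 0 -> (forall j, 0 <= D.2 j) -> effective pts D.
Proof.
move=> d0 e_ge0; split; first by rewrite d0.
exists 1; split; first exact: oner_neq0.
split; first by rewrite d0; exact: dhomog1.
by move=> j mon; have := e_ge0 j; lia.
Qed.

Lemma degree_eq0_B16 (d : int) (e : 'I_16 -> int) :
  0 <= d -> 0 <= d * d - \sum_j e j * e j + 3 * d + \sum_j e j ->
  2 * (4 * d + \sum_j e j) < 4 -> d = 0.
Proof.
move=> d_ge0 hchi hB.
have hCS := sum_sqr_affine_ge0 e 4 d; rewrite card_ord in hCS.
have hQS : 0 <= \sum_j e j * e j + \sum_j e j.
  by rewrite -big_split sumr_ge0 // => j _; exact: int_sqr_addr_ge0.
(* hCS with hchi and hB bounds d <= 2; hQS with hchi and hB rules out d = 1, 2. *)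
nia.
Qed.

Lemma classify_B16_small (D : cls 16) :
  0 <= D.1 -> 1 <= chi D -> 2 * dot B16 D < dot B16 (Kcls 16) ->
  D = zerocls 16 \/ exists j : 'I_16, D = Ecls j.
Proof.
case: D => d e /= d_ge0; rewrite chi_ge1E dot_B16_Kcls dot_B16 dot_Kcls /dot /=.
move=> hchi hB.
have d0 : d = 0 by apply: (degree_eq0_B16 d_ge0); lra.
move: hchi hB; rewrite d0 /= => hchi hB.
have e01 : forall i, e i = 0 \/ e i = 1 by apply: sum_sqr_le_sum_zero_one; lra.
have hS : \sum_i e i <= 1 by set S := \sum_i e i in hB *; lia.
by case: (zero_one_sum_le1 e01 hS) => [-> | [j ->]]; [left | right; exists j].
Qed.

Theorem theorem4p13 (R : realType) :
  exists f : nat -> {mpoly R[i][16 + 16]},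
    (forall k, f k != 0) /\
    forall pts : 'I_16 -> R[i] * R[i],
      (forall k, (f k).@[coords pts] != 0) ->
      forall D : cls 16,
        (effective pts D /\ (1 <= chi D)%R /\
           (2 * dot B16 D < dot B16 (Kcls 16))%R)
        <-> (D = zerocls 16 \/ exists j : 'I_16, D = Ecls j).
Proof.
exists (fun _ => 1); split=> [_|pts _ D]; first exact: oner_neq0.
split=> [[[d_ge0 _] [hchi hB]] | [-> | [j ->]]].
- exact: classify_B16_small.
- split; first by apply: effective_nonneg_exceptional => // j; rewrite ffunE.
  rewrite chi_eq1; last by rewrite !dot_zerocls.
  rewrite dot_B16_Kcls dot_zerocls.
  by split; [exact: lexx | lia].
- split; first by apply: effective_nonneg_exceptional => // k; rewrite ffunE; case: ifP.
  rewrite chi_eq1; last by rewrite dot_Ecls_Ecls dot_Kcls_Ecls.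
  rewrite dot_B16_Kcls dot_B16_Ecls.
  by split; [exact: lexx | lia].
Qed.
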